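(* Let $p$ be a prime and $m$ a positive integer with $m+2\le p$. Let $B$ be a finite left brace with $$(B,+)\cong \mathbb{Z}/(p^{\alpha_1})\times\cdots\times\mathbb{Z}/(p^{\alpha_m})$$ for integers $1\le\alpha_1\le\alpha_2\le\cdots\le\alpha_m$. Then $o_{\cdot}(x)=o_{+}(x)$ for every $x\in B$. Moreover, if $(B,\cdot)$ is abelian, then $(B,\cdot)\cong(B,+)$. In particular, if $|B|=p^n$ (and $(B,+)$ is any abelian group of that order) with $n+2\le p$, then $o_{\cdot}(x)=o_{+}(x)$ for every $x\in B$.
   Context: A left brace is a set $B$ with two binary operations $+$ and $\cdot$ such that $(B,+)$ is an abelian group, $(B,\cdot)$ is a group, and $a\cdot(b+c)+a=a\cdot b+a\cdot c$ for all $a,b,c\in B$. For $x\in B$, $o_{\cdot}(x)$ denotes the order of $x$ in the group $(B,\cdot)$ and $o_{+}(x)$ denotes the order of $x$ in the group $(B,+)$. *)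

From HB Require Import structures.
From mathcomp Require Import all_boot all_order all_algebra.
Set Implicit Arguments. Unset Strict Implicit. Unset Printing Implicit Defensive.
Import GRing.Theory.
Local Open Scope ring_scope.

Definition is_left_brace (B : zmodType) (mul : B -> B -> B) (one : B)
    (inv : B -> B) : Prop :=
  [/\ associative mul, left_id one mul, right_id one mul,
      left_inverse one inv mul /\ right_inverse one inv mul &
      forall a b c : B, mul a (b + c) + a = mul a b + mul a c].

Definition is_order (T : Type) (op : T -> T -> T) (e : T) (x : T) (n : nat)
  : Prop :=
  [/\ (0 < n)%N, iter n (op x) e = e &
      forall k : nat, (0 < k)%N -> iter k (op x) e = e -> (n <= k)%N].

(* (B,+) is isomorphic to Z/(p^a_0) x ... x Z/(p^a_(m-1)) : an additive
   bijection onto tuples (c_i)_i with 0 <= c_i < p^(a i), added componentwise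
   modulo p^(a i). *)
Definition add_iso_prod_cyclic (B : zmodType) (p m : nat) (a : 'I_m -> nat)
  : Prop :=
  exists f : B -> 'I_m -> nat,
    [/\ forall x i, (f x i < p ^ a i)%N,
        forall x y i, f (x + y) i = ((f x i + f y i) %% p ^ a i)%N,
        forall x y, f x =1 f y -> x = y &
        forall g : 'I_m -> nat, (forall i, (g i < p ^ a i)%N) ->
          exists x, f x =1 g].

From HB Require Import structures.
From mathcomp Require Import all_boot all_order all_algebra all_fingroup.
From mathcomp Require Import all_solvable zify.
Import GRing.Theory.
Local Open Scope ring_scope.
Set Implicit Arguments. Unset Strict Implicit. Unset Printing Implicit Defensive.

(* Each lambda_x y := x * y - x is an automorphism of (B,+) with
   lambda_x \o lambda_y = lambda_(x*y), and x^k = \sum_(j < k) lambda_x^j x.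
   Write lambda_x = 1 + t.  As lambda_x^(p^R) = 1 and p divides the inner
   binomial coefficients, t is nilpotent on the p-torsion subgroup Omega_1(B);
   since |Omega_1(B)| <= p^d, the descending chain t^j(Omega_1(B)) gives
   t^d = 0 there.  Then \sum_(j < p) lambda_x^j = \sum_i 'C(p, i+1) t^i, and
   d + 2 <= p makes this map kill y exactly when p y = 0.  Hence the additive
   order of x^p is the additive order of x divided by p, and induction on the
   order gives o_.(x) = o_+(x).  If (B,.) is abelian, both groups then have
   Omega_k subgroups of equal orders for all k, hence the same invariants. *)

Definition delta (V : zmodType) (f : V -> V) (y : V) : V := f y - y.

Lemma mulrn_binomial_torsion (V : zmodType) (p i : nat) (w : V) :
  prime p -> (0 < i < p)%N -> w *+ p = 0 -> w *+ 'C(p, i) = 0.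
Proof.
move=> pp ip wp; rewrite -(divnK (prime_dvd_bin pp ip)).
by rewrite mulnC mulrnA wp mul0rn.
Qed.

Lemma iter_last_nonzero (V : zmodType) (f : V -> V) (k : nat) (w : V) :
  w != 0 -> iter k f w = 0 -> exists d, iter d f w != 0 /\ iter d.+1 f w = 0.
Proof.
elim: k w => [|k IH] w nz; first by rewrite /= => w0; rewrite w0 eqxx in nz.
rewrite iterSr; have [fw0|nzf] := eqVneq (f w) 0; first by exists 0%N.
by move=> /(IH _ nzf) [d [h1 h2]]; exists d.+1; split; rewrite iterSr.
Qed.

Lemma eq_iter_on (T : Type) (P : T -> Prop) (f g : T -> T) (k : nat) (v : T) :
  (forall u, P u -> f u = g u) -> (forall u, P u -> P (g u)) -> P v ->
  iter k f v = iter k g v.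
Proof.
move=> fg gP Pv; suff [] : iter k f v = iter k g v /\ P (iter k g v) by [].
by elim: k => [|k [/= -> IH]] //; rewrite fg //; split=> //; apply: gP.
Qed.

Section AdditiveIterates.
Variables (V : zmodType) (f : V -> V).
Hypothesis fD : {morph f : y z / y + z}.

Lemma addmorph0 : f 0 = 0.
Proof. by apply: (addrI (f 0)); rewrite -fD !addr0. Qed.

Lemma addmorphN y : f (- y) = - f y.
Proof. by apply: (addIr (f y)); rewrite -fD !addNr addmorph0. Qed.

Lemma addmorphMn y k : f (y *+ k) = f y *+ k.
Proof. by elim: k => [|k IH]; rewrite ?mulr0n ?addmorph0 // !mulrS fD IH. Qed.

Lemma addmorph_sum n (F : 'I_n -> V) :
  f (\sum_(i < n) F i) = \sum_(i < n) f (F i).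
Proof. exact: (big_morph f fD addmorph0). Qed.

Lemma iter_addmorph k : {morph iter k f : y z / y + z}.
Proof. by elim: k => // k IH y z /=; rewrite IH fD. Qed.

Lemma delta_addmorph : {morph delta f : y z / y + z}.
Proof. by move=> y z; rewrite /delta fD opprD addrACA. Qed.

Local Notation t := (delta f).

Lemma iter_binomial j n y : (j < n)%N ->
  iter j f y = \sum_(i < n) iter i t y *+ 'C(j, i).
Proof.
elim: j n => [|j IH] [|n] // ltjn.
  by rewrite big_ord_recl /= bin0 mulr1n big1 ?addr0.
rewrite /= (IH n.+1 (ltnW ltjn)) addmorph_sum.
rewrite (eq_bigr (fun i : 'I_n.+1 =>
   iter i t y *+ 'C(j, i) + iter i.+1 t y *+ 'C(j, i))); last first.
  by move=> i _; rewrite addmorphMn -mulrnDl /= /delta addrC subrK.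
rewrite big_split /= big_ord_recl [X in _ + X = _]big_ord_recr /=.
rewrite (bin_small (ltjn : (j < n)%N)) mulr0n addr0 [RHS]big_ord_recl bin0.
rewrite [X in _ = _ + X](eq_bigr (fun i : 'I_n =>
   iter (bump 0 i) t y *+ 'C(j, bump 0 i) + iter i.+1 t y *+ 'C(j, i))).
  by rewrite big_split /= addrA.
by move=> i _; rewrite binS mulrnDr.
Qed.

Lemma sum_iter_binomial k y :
  \sum_(j < k) iter j f y = \sum_(i < k) iter i t y *+ 'C(k, i.+1).
Proof.
elim: k => [|k IH]; first by rewrite !big_ord0.
rewrite big_ord_recr /= IH (iter_binomial y (ltnSn k)).
rewrite [RHS](eq_bigr (fun i : 'I_k.+1 =>
   iter i t y *+ 'C(k, i.+1) + iter i t y *+ 'C(k, i))); last first.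
  by move=> i _; rewrite binS mulrnDr.
by rewrite big_split /= [X in _ = X + _]big_ord_recr /= bin_small // mulr0n addr0.
Qed.

End AdditiveIterates.

Lemma iter_torsion (V : zmodType) (f : V -> V) (n k : nat) (v : V) :
  {morph f : y z / y + z} -> v *+ n = 0 -> iter k f v *+ n = 0.
Proof.
move=> fD vn; have fkD := iter_addmorph fD k.
by rewrite -(addmorphMn fkD) vn (addmorph0 fkD).
Qed.

Lemma iter_prime_torsion (V : zmodType) (f : V -> V) (p : nat) (v : V) :
  {morph f : y z / y + z} -> prime p -> v *+ p = 0 ->
  iter p f v = v + iter p (delta f) v.
Proof.
case: p => // p fD pp vp.
rewrite (iter_binomial fD v (ltnSn _)) big_ord_recl bin0 mulr1n.
congr (_ + _); rewrite big_ord_recr /= binn mulr1n big1 ?add0r //.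
move=> i _; apply: mulrn_binomial_torsion => //.
  by rewrite /bump /= add1n ltnS ltn_ord.
exact: (iter_torsion i.+1 (delta_addmorph fD) vp).
Qed.

Lemma iter_ppow_torsion (V : zmodType) (p R : nat) (f : V -> V) (v : V) :
  {morph f : y z / y + z} -> prime p -> v *+ p = 0 ->
  iter (p ^ R) f v = v + iter (p ^ R) (delta f) v.
Proof.
elim: R f v => [|R IH] f v fD pp vp; first by rewrite expn0 /= /delta addrC subrK.
rewrite expnSr !iterM (IH _ v (iter_addmorph fD p)) //; congr (_ + _).
apply: (@eq_iter_on _ (fun u => u *+ p = 0)) => // u up.
  by rewrite /delta (iter_prime_torsion fD) // addrC addKr.
exact: (iter_torsion p (delta_addmorph fD) up).
Qed.

Section NilpotentOnSubgroup.
Variables (B : finZmodType) (p N : nat) (t : B -> B) (V : {set B}).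
Hypotheses (p_pr : prime p) (pB : p.-nat #|B|) (tD : {morph t : y z / y + z}).
Hypotheses (V0 : 0 \in V) (VD : {in V &, forall u v, u + v \in V}).
Hypotheses (tV : {in V, forall v, t v \in V}).
Hypothesis tN : {in V, forall v, iter N t v = 0}.

Let M j := [set iter j t v | v in V].

Let M0 j : 0 \in M j.
Proof. by apply/imsetP; exists 0; rewrite ?(addmorph0 (iter_addmorph tD j)). Qed.

Let M0V : M 0 = V.
Proof. by apply/setP => v; rewrite /M imset_id. Qed.

Let iterV j : {in V, forall v, iter j t v \in V}.
Proof. by elim: j => // j IH v vV; rewrite iterSr IH ?tV. Qed.

Let group_M j : group_set (M j).
Proof.
apply/group_setP; split; first exact: M0.
move=> _ _ /imsetP[u uV ->] /imsetP[v vV ->]; apply/imsetP; exists (u + v).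
  exact: VD.
by rewrite (iter_addmorph tD).
Qed.

Let card_M j : #|M j| = (p ^ logn p #|M j|)%N.
Proof.
have MB: (#|M j| %| #|B|)%N.
  rewrite -cardsT.
  exact: (@cardSg _ [group of [set: B]] (Group (group_M j)) (subsetT _)).
by have [k ->] := p_natP (pnat_dvd MB pB); rewrite pfactorK.
Qed.

Let M_succ j : M j.+1 = t @: M j.
Proof. by rewrite -imset_comp. Qed.

Let M_succ_sub j : M j.+1 \subset M j.
Proof.
apply/subsetP => _ /imsetP[v vV ->]; apply/imsetP.
by exists (t v); rewrite ?tV // -iterSr.
Qed.

Let M_stable_trivial j : M j.+1 = M j -> M j = [set 0].
Proof.
move=> Mj; have MjN k : M (k + j) = M j.
  by elim: k => [|k IH] //; rewrite addSn M_succ IH -M_succ.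
apply/setP => x; rewrite inE; apply/idP/eqP => [|->]; last exact: M0.
by rewrite -(MjN N) => /imsetP[v vV ->]; rewrite iterD tN ?iterV.
Qed.

Let logn_M j : (logn p #|M j| <= logn p #|V| - j)%N.
Proof.
elim: j => [|j IH]; first by rewrite M0V subn0.
have [Mj|Mj] := eqVneq (M j.+1) (M j).
  by rewrite Mj M_stable_trivial // cards1 logn1.
suff: (logn p #|M j.+1| < logn p #|M j|)%N by lia.
rewrite -(@ltn_exp2l p) ?prime_gt1 // -!card_M; apply: proper_card.
by rewrite properEneq Mj M_succ_sub.
Qed.

Lemma iter_nilpotent_card_bound d v :
  (#|V| <= p ^ d)%N -> v \in V -> iter d t v = 0.
Proof.
move=> Vd vV; set l := logn p #|V|.
have ld : (l <= d)%N.
  by rewrite -(leq_exp2l _ _ (prime_gt1 p_pr)) /l -M0V -card_M M0V.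
have /cards1P[x Mx] : #|M l| == 1%N.
  by rewrite card_M; have := logn_M l; rewrite subnn leqn0 => /eqP->.
have := M0 l; have : iter l t v \in M l by apply: imset_f.
rewrite Mx !inE => /eqP tlv /eqP x0.
by rewrite -(subnK ld) iterD tlv -x0 (addmorph0 (iter_addmorph tD _)).
Qed.

End NilpotentOnSubgroup.

Lemma pgroup_dvdn_order (gT : finGroupType) (p : nat) (x : gT) :
  p.-nat #|gT| -> x != 1%g -> (p %| #[x]%g)%N.
Proof.
move=> pG nt; have /p_natP[k ox] : p.-nat #[x]%g.
  by apply: pnat_dvd pG; rewrite -cardsT order_dvdG ?inE.
move: nt; rewrite -order_gt1 ox.
by case: k {ox} => [|k]; rewrite ?expn0 // expnS dvdn_mulr.
Qed.

Section Brace.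
Variables (B : finZmodType) (mul : B -> B -> B) (one : B) (inv : B -> B).

(* The multiplicative group of the brace; it depends on the brace axioms so
   that they can serve as the group instance below. *)
Definition brace_group (_ : is_left_brace mul one inv) : Type := B.

Variable Hb : is_left_brace mul one inv.

HB.instance Definition _ := Finite.on (brace_group Hb).

Let mulA : associative (mul : brace_group Hb -> _ -> _).
Proof. by have [] := Hb. Qed.
Let mul1 : left_id (one : brace_group Hb) mul.
Proof. by have [] := Hb. Qed.
Let mulV : left_inverse (one : brace_group Hb) inv mul.
Proof. by have [_ _ _ []] := Hb. Qed.

HB.instance Definition _ := Finite_isGroup.Build (brace_group Hb) mulA mul1 mulV.

Lemma brace_one0 : one = 0.
Proof. by have [_ mul1' _ _ /(_ one 0 0)] := Hb; rewrite !mul1' !add0r. Qed.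

Definition lambda (a y : B) : B := mul a y - a.

Lemma lambda_addmorph a : {morph lambda a : y z / y + z}.
Proof.
move=> y z; have [_ _ _ _ mulDr] := Hb; rewrite /lambda.
by rewrite -[mul a (y + z)](addrK a) mulDr addrACA -!addrA.
Qed.

Lemma lambda1 y : lambda one y = y.
Proof. by have [_ mul1' _ _ _] := Hb; rewrite /lambda mul1' brace_one0 subr0. Qed.

Lemma lambdaM a b y : lambda a (lambda b y) = lambda (mul a b) y.
Proof.
have lamN := addmorphN (lambda_addmorph a).
rewrite [lambda b y]/lambda lambda_addmorph lamN /lambda mulA.
by rewrite opprB addrA subrK.
Qed.

Lemma iter_lambda (x : brace_group Hb) k y :
  iter k (lambda x) y = lambda (x ^+ k)%g y.
Proof.
elim: k y => [|k IH] y /=; first by rewrite lambda1.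
by rewrite IH lambdaM expgS.
Qed.

Lemma expg_sum_lambda (x : brace_group Hb) k :
  (x ^+ k)%g = \sum_(j < k) iter j (lambda x) x :> B.
Proof.
elim: k => [|k IH]; first by rewrite big_ord0 expg0; apply: brace_one0.
rewrite expgS big_ord_recl -(addmorph_sum (lambda_addmorph x)) -IH.
by rewrite [RHS]addrC /lambda subrK.
Qed.

Section PrimePowerOrder.
Variables (p d : nat).
Hypotheses (p_pr : prime p) (pB : p.-nat #|B|) (dp : (d + 2 <= p)%N).
Hypothesis card_torsion : (#|[set v : B | v *+ p == 0%R]| <= p ^ d)%N.

Let card_brace : #|[set: brace_group Hb]| = #|B|.
Proof. exact: cardsT. Qed.

Lemma delta_lambda_nilpotent x k v :
  (d <= k)%N -> v *+ p = 0 -> iter k (delta (lambda x)) v = 0.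
Proof.
have lamD := lambda_addmorph x; have tD := delta_addmorph lamD.
move=> dk vp; apply: (iter_nilpotent_card_bound (N := #|B|)
  (V := [set v : B | v *+ p == 0%R]) p_pr pB tD) => //.
- by rewrite inE mul0rn.
- by move=> u w; rewrite !inE mulrnDl => /eqP-> /eqP->; rewrite addr0.
- by move=> u; rewrite !inE => /eqP up; apply/eqP; apply: (iter_torsion 1 tD up).
- move=> u; rewrite inE => /eqP up; have [R cB] := p_natP pB.
  have := iter_ppow_torsion R lamD p_pr up.
  rewrite -cB (iter_lambda (x : brace_group Hb)) -card_brace expg_cardG ?inE //.
  by rewrite lambda1 => /eqP; rewrite -subr_eq0 opprD addNKr oppr_eq0 => /eqP.
- by apply: leq_trans card_torsion _; rewrite leq_exp2l ?prime_gt1.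
- by rewrite inE vp.
Qed.

Lemma sum_lambda_torsion x y :
  y *+ p = 0 -> \sum_(j < p) iter j (lambda x) y = 0.
Proof.
have tD := delta_addmorph (lambda_addmorph x).
move=> yp; rewrite (sum_iter_binomial (lambda_addmorph x)); apply: big1 => i _.
have [ip|] := ltnP i.+1 p.
  by apply: mulrn_binomial_torsion; rewrite ?ip ?(iter_torsion i tD yp).
have := ltn_ord i => ip pi; rewrite delta_lambda_nilpotent ?mul0rn //; lia.
Qed.

Lemma torsion_of_sum_lambda x y : y *+ p *+ p = 0 ->
  \sum_(j < p) iter j (lambda x) y = 0 -> y *+ p = 0.
Proof.
set t := delta (lambda x); have tD := delta_addmorph (lambda_addmorph x).
move=> yp2 Sy; apply/eqP/negPn/negP => ypn0.
(* Apply t^e, for the last e with t^e (p y) != 0: all terms but the first die. *)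
have [e [te tSe]] :=
  iter_last_nonzero ypn0 (delta_lambda_nilpotent x (leqnn d) yp2).
set u := iter e.+1 t y.
have up : u *+ p = 0 by rewrite -(addmorphMn (iter_addmorph tD _)).
move: Sy; rewrite (sum_iter_binomial (lambda_addmorph x)) => /(congr1 (iter e t)).
rewrite (addmorph0 (iter_addmorph tD e)) (addmorph_sum (iter_addmorph tD e)).
rewrite (bigD1 (Ordinal (prime_gt0 p_pr))) //= big1 ?addr0.
  by rewrite bin1 => /eqP; rewrite (negbTE te).
move=> [[|i] ip] //= _; rewrite -iterS (addmorphMn (iter_addmorph tD e)) -iterD.
rewrite addnS -addSn addnC iterD -/u; have [i2p|] := ltnP i.+2 p.
  by apply: mulrn_binomial_torsion; rewrite ?i2p ?(iter_torsion i tD up).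
move=> pi; rewrite delta_lambda_nilpotent ?mul0rn //; lia.
Qed.

Lemma sum_lambda_eq0 x y :
  (\sum_(j < p) iter j (lambda x) y == 0) = (y *+ p == 0).
Proof.
apply/eqP/eqP; last exact: sum_lambda_torsion.
have : y *+ #|B| = 0 by rewrite -cardsT -FinRing.zmodXgE expg_cardG ?inE.
have [R ->] := p_natP pB; elim: R y => [|R IH] y yR Sy.
  by rewrite expn0 mulr1n in yR; rewrite yR mul0rn.
have Syp : \sum_(j < p) iter j (lambda x) (y *+ p) = 0.
  under eq_bigr do rewrite (addmorphMn (iter_addmorph (lambda_addmorph x) _)).
  by rewrite sumrMnl Sy mul0rn.
by apply: torsion_of_sum_lambda Sy; apply: IH Syp; rewrite -mulrnA -expnS.
Qed.

Lemma order_expg_brace (x : B) :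
  (p %| #[x]%g)%N -> #[((x : brace_group Hb) ^+ p)%g : B]%g = (#[x]%g %/ p)%N.
Proof.
move=> px; set x' := ((x : brace_group Hb) ^+ p)%g.
have dvd_order k : (#[x' : B]%g %| k)%N = (#[x]%g %/ p %| k)%N.
  rewrite order_dvdn FinRing.zmodXgE /x' expg_sum_lambda -sumrMnl.
  under eq_bigr do rewrite -(addmorphMn (iter_addmorph (lambda_addmorph x) _)).
  rewrite sum_lambda_eq0 -mulrnA -FinRing.zmodXgE -order_dvdn.
  by rewrite -{1}(divnK px) dvdn_pmul2r ?prime_gt0.
by apply/eqP; rewrite eqn_dvd dvd_order dvdnn -dvd_order dvdnn.
Qed.

Lemma brace_order (x : B) : #[x : brace_group Hb]%g = #[x]%g.
Proof.
have [n] := ubnP #[x]%g; elim: n x => // n IH x /ltnSE le_xn.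
have [-> | nt] := eqVneq x one.
  by rewrite [in RHS]brace_one0 !order1.
have px : (p %| #[x]%g)%N.
  by apply: (@pgroup_dvdn_order B) => //; rewrite brace_one0 in nt.
have pX : (p %| #[x : brace_group Hb]%g)%N.
  by apply: (@pgroup_dvdn_order (brace_group Hb)); rewrite // -cardsT card_brace.
rewrite -(divnK pX) -(orderXdiv pX) IH order_expg_brace ?divnK //.
by apply: leq_trans le_xn; rewrite ltn_Pdiv ?prime_gt1.
Qed.

End PrimePowerOrder.

End Brace.

Lemma is_order_mulgE (gT : finGroupType) (x : gT) (n : nat) :
  is_order (@mulg gT) 1%g x n <-> n = #[x]%g.
Proof.
rewrite /is_order; split.
  case=> n0; rewrite iter_mulg_1 => xn min; apply/eqP; rewrite eqn_leq.
  rewrite min ?order_gt0 ?iter_mulg_1 ?expg_order //=.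
  by rewrite dvdn_leq // order_dvdn xn.
move=> ->; split; rewrite ?order_gt0 ?iter_mulg_1 ?expg_order //.
by move=> k k0; rewrite iter_mulg_1 => /eqP; rewrite -order_dvdn; apply: dvdn_leq.
Qed.

Lemma perm_eq_count_gtn (s1 s2 : seq nat) :
  all (leq 1) s1 -> all (leq 1) s2 ->
  (forall n, count (fun k => n < k)%N s1 = count (fun k => n < k)%N s2) ->
  perm_eq s1 s2.
Proof.
have count_gtn k (s : seq nat) : count (fun y => k < y)%N s =
    (count_mem k.+1 s + count (fun y => k.+1 < y)%N s)%N.
  by elim: s => //= y s ->; lia.
have count0 (s : seq nat) : all (leq 1) s -> count_mem 0%N s = 0%N.
  move=> s_gt0; apply/count_memPn; apply: contraTN s_gt0 => s0.
  by apply/allPn; exists 0%N.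
move=> s1_gt0 s2_gt0 cnt; apply/allP => [[|k] _] /=; first by rewrite !count0.
have := cnt k; rewrite (count_gtn k s1) (count_gtn k s2) cnt => /eqP.
by rewrite eqn_add2r.
Qed.

Section AbelianPGroups.
Local Open Scope group_scope.

Lemma pgroup_order_logn (gT : finGroupType) (p : nat) (x : gT) :
  p.-group [set: gT] -> #[x]%g = (p ^ logn p #[x]%g)%N.
Proof.
by move=> pG; rewrite -p_part part_pnat_id //; apply: mem_p_elt pG _; rewrite inE.
Qed.

Lemma abelian_pgroup_isog_card_Ohm (gT rT : finGroupType) (p : nat) :
  p.-group [set: gT] -> p.-group [set: rT] ->
  abelian [set: gT] -> abelian [set: rT] ->
  (forall k, #|'Ohm_k([set: gT])| = #|'Ohm_k([set: rT])|) ->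
  [set: gT] \isog [set: rT].
Proof.
move=> pG pR cG cR cardO; rewrite eq_abelian_type_isog //.
have [bG dG tG] := abelian_structure cG; have [bR dR tR] := abelian_structure cR.
pose lo (aT : finGroupType) (b : seq aT) := map (logn p \o order) b.
have orders_lo (aT : finGroupType) (b : seq aT) : p.-group [set: aT] ->
    map order b = map (expn p) (lo _ b).
  by move=> pA; rewrite -map_comp; apply: eq_map => x /=; apply: pgroup_order_logn.
have lo_gt0 (aT : finGroupType) (b : seq aT) : p.-group [set: aT] ->
    all [pred m | 1 < m]%N (map order b) -> all (leq 1) (lo _ b).
  move=> pA /allP b_gt1; apply/allP => _ /mapP[x xb ->] /=.
  have := b_gt1 _ (map_f order xb); rewrite {1}(pgroup_order_logn x pA) /=.
  by case: (logn p #[x]).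
(* |Ohm_n.+1 : Ohm_n| counts the cyclic factors of order > p^n. *)
have perm_lo : perm_eq (lo _ bG) (lo _ bR).
  apply: perm_eq_count_gtn => [||n].
  - by apply: lo_gt0; rewrite // tG abelian_type_gt1.
  - by apply: lo_gt0; rewrite // tR abelian_type_gt1.
  rewrite /lo !count_map (count_logn_dprod_cycle p n dG).
  rewrite (count_logn_dprod_cycle p n dR).
  by rewrite -!divgS ?Ohm_leq // !cardO.
rewrite -tG -tR; apply/eqP/(@sorted_eq _ geq).
- by move=> x y z yx zy; apply: leq_trans zy yx.
- by move=> x y /andP[yx xy]; apply/eqP; rewrite eqn_leq; apply/andP.
- by rewrite tG abelian_type_sorted.
- by rewrite tR abelian_type_sorted.
by rewrite (orders_lo _ _ pG) (orders_lo _ _ pR) perm_map.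
Qed.

End AbelianPGroups.

Section BraceOfPrimePowerOrder.
Local Open Scope group_scope.
Variables (B : finZmodType) (mul : B -> B -> B) (one : B) (inv : B -> B).
Variables (p d : nat).
Hypotheses (Hb : is_left_brace mul one inv) (p_pr : prime p) (pB : p.-nat #|B|).
Hypothesis dp : (d + 2 <= p)%N.
Hypothesis card_torsion : (#|[set v : B | v *+ p == 0%R]| <= p ^ d)%N.

Lemma brace_is_order (x : B) (n : nat) :
  is_order mul one x n <-> is_order +%R 0 x n.
Proof.
have oX := brace_order Hb p_pr pB dp card_torsion x.
split=> [/(is_order_mulgE (x : brace_group Hb)) | /(is_order_mulgE (x : B))] ->.
  by apply/is_order_mulgE; rewrite oX.
by apply/(is_order_mulgE (x : brace_group Hb)); rewrite oX.
Qed.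

Lemma brace_commutative_isog : commutative mul ->
  exists f : B -> B, bijective f /\ forall x y : B, f (mul x y) = f x + f y.
Proof.
move=> mulC.
have pG : p.-group [set: brace_group Hb] by rewrite /pgroup cardsT.
have pB' : p.-group [set: B] by rewrite /pgroup cardsT.
have cG : abelian [set: brace_group Hb] by apply/centsP => x _ y _; apply: mulC.
have cB := FinRing.zmod_abelian [set: B].
have cardO k : #|'Ohm_k([set: brace_group Hb])| = #|'Ohm_k([set: B])|.
  rewrite (OhmEabelian pG) ?(abelianS (Ohm_sub _ _) cG) //.
  rewrite (OhmEabelian pB') ?(abelianS (Ohm_sub _ _) cB) //.
  apply: eq_card => x; rewrite !inE -!order_dvdn.
  by rewrite (brace_order Hb p_pr pB dp card_torsion).
have [f injf imf] := isogP (abelian_pgroup_isog_card_Ohm pG pB' cG cB cardO).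
exists f; split; first by apply: injF_bij => x y; apply: (injmP injf); rewrite inE.
by move=> x y; apply: (morphM f (in_setT (x : brace_group Hb)) (in_setT y)).
Qed.

End BraceOfPrimePowerOrder.

Section ProductOfCyclic.
Variables (B : finZmodType) (p m : nat) (a : 'I_m -> nat) (f : B -> 'I_m -> nat).
Hypotheses (p_pr : prime p) (a_gt0 : forall i, (1 <= a i)%N).
Hypotheses (f_lt : forall x i, (f x i < p ^ a i)%N).
Hypotheses (fD : forall x y i, f (x + y) i = ((f x i + f y i) %% p ^ a i)%N).
Hypotheses (f_inj : forall x y, f x =1 f y -> x = y).

Let f0 i : f 0 i = 0%N.
Proof.
have := fD 0 0 i; rewrite addr0 => f00.
have : (f 0%R i + 0 == f 0%R i + f 0%R i %[mod p ^ a i])%N.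
  by rewrite addn0 {1}f00 modn_mod.
by rewrite eqn_modDl mod0n modn_small // eq_sym => /eqP.
Qed.

Let fMn x k i : f (x *+ k) i = (k * f x i %% p ^ a i)%N.
Proof.
elim: k => [|k IH]; first by rewrite mulr0n f0 mul0n mod0n.
by rewrite mulrS fD IH modnDmr mulSn.
Qed.

Lemma prod_cyclic_pnat : p.-nat #|B|.
Proof.
suff: (p.-group [set: B])%g by rewrite /pgroup cardsT.
rewrite -pnat_exponent; apply: (@pnat_dvd _ (p ^ \sum_(i < m) a i)%N).
  apply/exponentP => x _; apply: f_inj => i; rewrite fMn f0; apply/eqP.
  by rewrite -[_ == 0%N]/(dvdn _ _) dvdn_mulr // dvdn_exp2l // (bigD1 i) //= leq_addr.
by rewrite pnatX pnat_id.
Qed.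

Lemma prod_cyclic_card_torsion : (#|[set v : B | v *+ p == 0%R]| <= p ^ m)%N.
Proof.
(* A p-torsion element has coordinates divisible by p^(a i - 1), so it is
   determined by the m leading base-p digits. *)
pose digit (y : B) : {ffun 'I_m -> 'I_p.-1.+1} :=
  [ffun i => inord (f y i %/ p ^ (a i).-1)].
have pa i : (p ^ a i = p ^ (a i).-1 * p)%N by rewrite -expnSr prednK.
have pa_gt0 i : (0 < p ^ (a i).-1)%N by rewrite expn_gt0 prime_gt0.
have digitK y i : y *+ p = 0 -> f y i = (f y i %/ p ^ (a i).-1 * p ^ (a i).-1)%N.
  move=> yp; rewrite divnK //; have := fMn y p i; rewrite yp f0 => /esym/eqP.
  by rewrite -[_ == 0%N]/(dvdn _ _) pa [(p * _)%N]mulnC dvdn_pmul2r ?prime_gt0.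
have digit_lt y i : (f y i %/ p ^ (a i).-1 < p)%N by rewrite ltn_divLR // mulnC -pa.
have pE : p.-1.+1 = p by rewrite prednK ?prime_gt0.
have -> : (p ^ m = #|{ffun 'I_m -> 'I_p.-1.+1}|)%N.
  by rewrite card_ffun !card_ord pE.
apply: (@leq_card_in _ _ digit).
move=> y z; rewrite !inE => /eqP yp /eqP zp /ffunP digit_eq; apply: f_inj => i.
have := digit_eq i; rewrite !ffunE => /(congr1 (@nat_of_ord _)).
by rewrite !inordK ?pE ?digit_lt // => eq_digit; rewrite (digitK y) // (digitK z) // eq_digit.
Qed.

End ProductOfCyclic.

Theorem theorem2p5 :
  (forall (p m : nat) (a : 'I_m -> nat) (B : finZmodType)
          (mul : B -> B -> B) (one : B) (inv : B -> B),
      prime p -> (0 < m)%N -> (m + 2 <= p)%N ->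
      (forall i, (1 <= a i)%N) ->
      (forall i j : 'I_m, (i <= j)%N -> (a i <= a j)%N) ->
      add_iso_prod_cyclic B p a ->
      is_left_brace mul one inv ->
      (forall (x : B) (n : nat), is_order mul one x n <-> is_order +%R 0 x n)
      /\ (commutative mul ->
          exists f : B -> B, bijective f /\
            forall x y : B, f (mul x y) = f x + f y))
  /\
  (forall (p n : nat) (B : finZmodType)
          (mul : B -> B -> B) (one : B) (inv : B -> B),
      prime p -> #|B| = (p ^ n)%N -> (n + 2 <= p)%N ->
      is_left_brace mul one inv ->
      forall (x : B) (k : nat), is_order mul one x k <-> is_order +%R 0 x k).
Proof.
split.
  move=> p m a B mul one inv p_pr _ mp a_gt0 _ [f [f_lt fD f_inj _]] Hb.
  have pB := prod_cyclic_pnat p_pr f_lt fD f_inj.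
  have cardV := prod_cyclic_card_torsion p_pr a_gt0 f_lt fD f_inj.
  split; first exact: (brace_is_order Hb p_pr pB mp cardV).
  exact: (brace_commutative_isog Hb p_pr pB mp cardV).
move=> p n B mul one inv p_pr cardB np Hb.
apply: (brace_is_order Hb p_pr _ np); first by rewrite cardB pnatX pnat_id.
by rewrite -cardB max_card.
Qed.
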